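(* Consider the single-item sale in an economic network described in the context, and the mechanism IDM-TC defined there. If the economic network forms a tree, then IDM-TC is efficient, individually rational, incentive compatible and weakly budget balanced. Moreover, for every feasible type report profile, the seller's revenue under IDM-TC is at least the revenue of the Vickrey (second-price) auction run among the seller's direct neighbours, i.e. at least the second highest bid among the buyers in $r_s$.
   Context: Setting. A seller $s$ sells one indivisible commodity. Besides $s$, there is a set $N=\{1,\dots,n\}$ of agents, each either a buyer or an intermediate node. Each buyer $i$ has a private value $b_i\ge 0$ for the commodity. Each intermediate node $i$ has a private neighbour set $r_i\subseteq N$ (the agents with whom she can directly exchange the sale information) and a publicly known cost $c_i$ incurred if a trade passes through her. Buyers have no links among themselves. Initially only the seller's neighbours $r_s\subseteq N$ know of the sale. The type of buyer $i$ is $t_i=b_i$ and of intermediate node $i$ is $t_i=r_i$. A buyer reports a bid $t'_i=b'_i\ge 0$; an intermediate node reports $t'_i=r'_i\subseteq r_i$, meaning she passes the sale information to exactly $r'_i$; $t'_i=nil$ if $i$ is uninformed or does not participate. A trading chain from $s$ to $i$ under reports $t'$ is a simple path $(a_1,\dots,a_p,i)$ with $a_1\in r_s$, $a_l\in r'_{a_{l-1}}$ for $1<l\le p$, and $i\in r'_{a_p}$. A report profile $t'$ is feasible if for every $i$, $t'_i\ne nil$ iff there is a trading chain from $s$ to $i$ following the reports $t'_{-i}$; only feasible profiles are considered (when an agent changes her report, the others' profile adjusts so as to remain feasible). For an informed agent $i$, $LCC_i$ is a trading chain from $s$ to $i$ minimizing the total cost of the intermediate nodes on it other than $i$. For a buyer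 $i$, $SW_i=b'_i-\sum_{j\in LCC_i\setminus\{i\}}c_j$. Mechanisms and properties. A mechanism $(\pi,x)$ assigns to each feasible $t'$ an allocation $\pi_i(t')\in\{-1,0,1\}$ ($1$: $i$ is the winner; $-1$: $i$ lies on the selected trading chain to the winner; $0$: otherwise), with at most one winner and the agents with $\pi_i\neq 0$ forming a trading chain from $s$ to the winner, and payments $x_i(t')\in\mathbb R$ (paid by $i$ to the seller; negative means $i$ receives money). Agent $i$'s value is $v_i=b_i$ if $\pi_i=1$, $v_i=-c_i$ if $\pi_i=-1$, $v_i=0$ otherwise; her utility is $v_i-x_i(t')$. The social welfare is $\sum_i v_i$ (computed with reported types). An allocation is efficient if it maximizes social welfare for every feasible $t'$; equivalently it gives the item to $m=\arg\max_{i}SW_i$ along $LCC_m$. $W^*(t')$ is the maximum social welfare under $t'$; for a set $X$ of agents, $W^*_{-X}$ is the maximum social welfare under the profile $t'_{-X}$ in which the agents of $X$ do not participate. Individual rationality (IR): every buyer has nonnegative utility when bidding truthfully, and every intermediate node has nonnegative utility for every report $r'_i\subseteq r_i$ and whatever the others do. Incentive compatibility (IC): for every agent, reporting her true type ($b'_i=b_i$, resp. $r'_i=r_i$, i.e. sharing with all neighbours) maximizes her utility regardless of the others' reports. Weakly budget balanced: the revenue $\sum_{i\in N}x_i(t')$ is $\ge 0$ for every feasible $t'$. Diffusion critical agents. Agent $i$ is a diffusion critical agent of $j$ if every trading chain from $s$ to $j$ passes through $i$ (in particular $i$ is one of $j$'s). $d_i$ is the set of agents having $i$ as a diffusion critical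 agent. The diffusion critical sequence $C_j$ of $j$ is the set of all diffusion critical agents of $j$, ordered $s_1,\dots,s_k,j$ so that $d_{s_1}\supset d_{s_2}\supset\dots\supset d_{s_k}\supset d_j$. IDM-TC. Given feasible $t'$: allocate the item to $m=\arg\max_{i}SW_i$ (random tie-breaking) along $LCC_m$. Write $C_m=\{1,2,\dots,m\}$ in its order, and for $i\in C_m\setminus\{m\}$ let $i+1$ be its successor in $C_m$. Payments: $x_i=W^*_{-d_i}-W^*_{-d_{i+1}}-c_i$ if $i\in C_m\setminus\{m\}$; $x_i=-c_i$ if $i\in LCC_m\setminus C_m$; $x_m=W^*_{-m}+\sum_{j\in LCC_m\setminus\{m\}}c_j$; $x_i=0$ otherwise. The economic network forms a tree means that the undirected graph on $\{s\}\cup N$ whose edges join each of $s$ and the intermediate nodes to their neighbours is a tree.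
   Formalization: IDM-TC sells to $m=\arg\max_{i}SW_i$ along $LCC_m$ only when $SW_m\ge 0$; when every informed buyer has $SW_i\le 0$, the seller may keep the item and all payments are 0. The statement above fails without it. *)

From HB Require Import structures.
From mathcomp Require Import all_boot all_order all_algebra.
From mathcomp Require Import boolp classical_sets reals.
Set Implicit Arguments. Unset Strict Implicit. Unset Printing Implicit Defensive.
Import Order.TTheory GRing.Theory Num.Theory.
Local Open Scope ring_scope.
Local Open Scope classical_set_scope.

(* Public data of the economic network.  Agents are the elements of the     *)
(* finite type [A] (the set N); the seller s is not an element of [A].       *)
Record env (A : finType) (R : realType) := Env {
  buyer : pred A;          (* buyer i  <->  i is a buyer; otherwise intermediate *)
  cost  : A -> R;
  rs    : {set A}
}.

(* A (type or report) profile: [bid t i] is b_i (meaningful for buyers),   *)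
(* [nbr t i] is r_i (meaningful for intermediate nodes).  The value [nil]   *)
(* of uninformed agents is not stored: whether an agent is informed is      *)
(* derived from the others' reports (feasibility), and the stored report of *)
(* an uninformed agent is never used.                                        *)
Record profile (A : finType) (R : realType) := Profile {
  bid : A -> R;
  nbr : A -> {set A}
}.

Section Defs.
Variables (A : finType) (R : realType) (e : env A R).

(* u passes the information to v under reports t, when agents of X do not *)
Definition link (t : profile A R) (X : set A) (u v : A) : Prop :=
  ~ X u /\ ~ X v /\ ~~ buyer e u /\ v \in nbr t u.

Fixpoint links (E : A -> A -> Prop) (x : A) (q : seq A) : Prop :=
  match q with
  | [::] => True
  | y :: q' => E x y /\ links E y q'
  end.

Definition chain (t : profile A R) (X : set A) (p : seq A) : Prop :=
  match p with
  | [::] => False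
  | x :: q => x \in rs e /\ ~ X x /\ links (link t X) x q /\ uniq p
  end.

Definition informed (t : profile A R) (X : set A) (j : A) : Prop :=
  exists q, chain t X (rcons q j).

Definition feasible (tt t : profile A R) : Prop :=
  forall i, informed t set0 i ->
    (buyer e i -> 0 <= bid t i) /\ (~~ buyer e i -> nbr t i \subset nbr tt i).

(* Allocations: [None] = no trade; [Some (m, q)] = m wins and the trading  *)
(* chain is rcons q m (the agents of q get pi_i = -1).                     *)
Definition alloc := option (A * seq A).

Definition valid_alloc (t : profile A R) (X : set A) (a : alloc) : Prop :=
  match a with
  | None => True
  | Some (m, q) => buyer e m /\ chain t X (rcons q m)
  end.

Definition welfare (t : profile A R) (a : alloc) : R :=
  match a with
  | None => 0
  | Some (m, q) => bid t m - \sum_(k <- q) cost e k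
  end.

Definition Wstar (t : profile A R) (X : set A) : R :=
  sup [set welfare t a | a in [set a | valid_alloc t X a]].

Definition lcc_cost (t : profile A R) (j : A) : R :=
  inf [set \sum_(k <- q) cost e k | q in [set q | chain t set0 (rcons q j)]].

Definition SW (t : profile A R) (j : A) : R := bid t j - lcc_cost t j.

Definition critical (t : profile A R) (i j : A) : Prop :=
  informed t set0 j /\ forall q, chain t set0 (rcons q j) -> i \in rcons q j.

Definition dset (t : profile A R) (i : A) : set A := [set j | critical t i j].

(* j is the successor of i in the diffusion critical sequence C_m *)
Definition crit_succ (t : profile A R) (m i j : A) : Prop :=
  critical t j m /\ j <> i /\ dset t j `<=` dset t i /\
  forall k, critical t k m -> k <> i -> dset t k `<=` dset t i ->
    dset t k `<=` dset t j.

(* Random tie-breaking is modelled by allowing every maximiser.             *)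
Definition idm_tc (t : profile A R) (a : alloc) (x : A -> R) : Prop :=
  match a with
  | None =>
      (forall j, buyer e j -> informed t set0 j -> SW t j <= 0) /\
      (forall i, x i = 0)
  | Some (m, q) =>
      buyer e m /\ chain t set0 (rcons q m) /\
          \sum_(k <- q) cost e k = lcc_cost t m /\
          0 <= SW t m /\
          (forall j, buyer e j -> informed t set0 j -> SW t j <= SW t m) /\
          (forall i,
             (i = m -> x i = Wstar t [set m] + \sum_(k <- q) cost e k) /\
             (i <> m -> critical t i m ->
                exists j, crit_succ t m i j /\
                  x i = Wstar t (dset t i) - Wstar t (dset t j) - cost e i) /\
             (i <> m -> ~ critical t i m -> i \in q -> x i = - cost e i) /\
             (i <> m -> ~ critical t i m -> i \notin q -> x i = 0))
  end.

Definition mechanism := profile A R -> alloc -> (A -> R) -> Prop.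

Definition utility (tt : profile A R) (a : alloc) (x : A -> R) (i : A) : R :=
  match a with
  | None => 0
  | Some (m, q) =>
      (if i == m then bid tt m else if i \in q then - cost e i else 0)
  end - x i.

Definition revenue (x : A -> R) : R := \sum_(i : A) x i.

Definition truthful_at (tt t : profile A R) (i : A) : Prop :=
  if buyer e i then bid t i = bid tt i else nbr t i = nbr tt i.

Definition same_except (t t' : profile A R) (i : A) : Prop :=
  forall k, k <> i -> bid t k = bid t' k /\ nbr t k = nbr t' k.

Definition efficient (tt : profile A R) (M : mechanism) : Prop :=
  forall t a x, feasible tt t -> M t a x ->
    forall a', valid_alloc t set0 a' -> welfare t a' <= welfare t a.

Definition individually_rational (tt : profile A R) (M : mechanism) : Prop :=
  forall t a x i, feasible tt t -> M t a x ->
    (buyer e i -> truthful_at tt t i -> 0 <= utility tt a x i) /\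
    (~~ buyer e i -> 0 <= utility tt a x i).

Definition incentive_compatible (tt : profile A R) (M : mechanism) : Prop :=
  forall i t t' a x a' x',
    feasible tt t -> feasible tt t' -> same_except t t' i ->
    truthful_at tt t i -> M t a x -> M t' a' x' ->
    utility tt a' x' i <= utility tt a x i.

Definition weakly_budget_balanced (tt : profile A R) (M : mechanism) : Prop :=
  forall t a x, feasible tt t -> M t a x -> 0 <= revenue x.

(* revenue >= second highest bid among the buyers in r_s (Vickrey revenue); *)
(* with fewer than two such buyers the Vickrey revenue is 0, which is       *)
(* covered by weak budget balance.                                          *)
Definition revenue_ge_vickrey (tt : profile A R) (M : mechanism) : Prop :=
  forall t a x, feasible tt t -> M t a x ->
    forall j k, j \in rs e -> k \in rs e -> buyer e j -> buyer e k -> j != k ->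
      Num.min (bid t j) (bid t k) <= revenue x.

End Defs.

(* The undirected graph on {s} \cup N (None = seller) whose edges join s and *)
(* each intermediate node to its (true) neighbours.                          *)
Definition net_adj (A : finType) (R : realType) (e : env A R) (tt : profile A R)
  : rel (option A) :=
  fun u v =>
    match u, v with
    | None, None => false
    | None, Some w | Some w, None => w \in rs e
    | Some u', Some v' =>
        (~~ buyer e u' && (v' \in nbr tt u')) || (~~ buyer e v' && (u' \in nbr tt v'))
    end.

Definition is_tree (V : finType) (adj : rel V) : Prop :=
  irreflexive adj /\ (forall x y, connect adj x y) /\
  (forall p : seq V, uniq p -> (2 < size p)%N -> ~~ cycle adj p).

(* In a tree every informed agent is reached by a unique trading chain, so the
   diffusion critical agents of the winner m are exactly the agents of LCC_m,
   the successor of i in C_m is the agent n following i on that chain, and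
   excluding d_i removes as much welfare as excluding i alone.  An intermediate
   agent i on the chain therefore gets utility W*_{-n} - W*_{-i} >= 0, and the
   payments telescope to the revenue W*_{-a}, where a in r_s is the first agent
   of the chain; this is at least the bid of any other buyer of r_s.  A truthful
   buyer gets the VCG utility W* - W*_{-i}.  Hiding neighbours only deletes
   trading chains and leaves W*_{-i} unchanged, so it cannot push W*_{-n'} above
   the utility of the truthful report. *)

From HB Require Import structures.
From mathcomp Require Import all_boot all_order all_algebra.
From mathcomp Require Import boolp classical_sets reals.
From mathcomp Require Import lra.
Import Order.TTheory GRing.Theory Num.Theory.
Set Implicit Arguments. Unset Strict Implicit. Unset Printing Implicit Defensive.

Section AcyclicPaths.
Variables (V : eqType) (adj : rel V).
Hypothesis adj_sym : symmetric adj.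
Hypothesis acyclic : forall c : seq V, uniq c -> 2 < size c -> ~~ cycle adj c.

Lemma acyclic_path_fork x p1 p2 :
  path adj x p1 -> path adj x p2 -> uniq (x :: p1) -> uniq (x :: p2) ->
  last x p1 \in p2 -> head x p1 = head x p2.
Proof.
move=> P1 P2 U1 U2 lastp1.
have p1_p2 : has (mem p2) p1.
  case: p1 {P1 U1} lastp1 => [|y p1] lastp1; first by move: U2; rewrite /= lastp1.
  by apply/hasP; exists (last y p1); rewrite ?mem_last.
(* The first vertex z of p1 on p2 closes the cycle x, p1 up to z, p2 back to x. *)
case/split_find: p1_p2 P1 U1 => z a b z_p2 a_p2 P1 U1.
case/splitPr: z_p2 P2 U2 a_p2 => c d P2 U2 a_p2.
have [/eqP|ac_nil] := eqVneq (size a + size c) 0.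
  by rewrite addn_eq0 !size_eq0 => /andP[/eqP-> /eqP->].
set cyc := x :: rcons a z ++ rev c.
have U1' : uniq (x :: rcons a z) by move: U1; rewrite -cat_cons cat_uniq => /andP[].
have U2' : uniq (x :: rcons c z) by move: U2; rewrite -cat_rcons -cat_cons cat_uniq => /andP[].
have cyc_uniq : uniq cyc.
  rewrite /cyc -cat_cons cat_uniq U1' rev_uniq has_rev.
  move: U2'; rewrite /= mem_rcons inE negb_or rcons_uniq => /andP[/andP[xz xc] /andP[zc ->]] /=.
  rewrite andbT; apply/hasPn => v vc; rewrite !inE mem_rcons !inE !negb_or.
  apply/and3P; split.
  - by apply: contraNneq xc => <-.
  - by apply: contraNneq zc => <-.
  - by apply: contraNN a_p2 => va; apply/hasP; exists v => //; rewrite inE mem_cat vc.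
have cyc_size : 2 < size cyc.
  by rewrite /= size_cat size_rcons size_rev; case: (size a) ac_nil => [|?] /=; case: (size c).
case/negP: (acyclic cyc_uniq cyc_size).
have P1' : path adj x (rcons a z) by move: P1; rewrite cat_path => /andP[].
rewrite /cyc /cycle /= rcons_cat cat_path P1' last_rcons -rev_cons /=.
have P2' : path adj x (rcons c z) by move: P2; rewrite -cat_rcons cat_path => /andP[].
have := rev_path adj x (rcons c z); rewrite last_rcons belast_rcons => ->.
by rewrite (eq_path (e' := adj)) // => u v; apply: adj_sym.
Qed.

Lemma acyclic_path_unique x p1 p2 :
  path adj x p1 -> path adj x p2 -> uniq (x :: p1) -> uniq (x :: p2) ->
  last x p1 = last x p2 -> p1 = p2.
Proof.
elim: p1 x p2 => [|y1 p1 IH] x [|y2 p2] //= P1 P2 U1 U2 last_eq.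
- by move: U2; rewrite last_eq /= mem_last.
- by move: U1; rewrite -last_eq /= mem_last.
have y12 : y1 = y2.
  apply: (@acyclic_path_fork x (y1 :: p1) (y2 :: p2)) => //.
  by rewrite /= last_eq mem_last.
subst y2; congr (_ :: _); apply: (IH y1) last_eq.
- by case/andP: P1.
- by case/andP: P2.
- by case/andP: U1.
- by case/andP: U2.
Qed.

End AcyclicPaths.

Lemma uniq_cat_cons_inj (T : eqType) (a b c d : seq T) (x : T) :
  uniq (a ++ x :: b) -> a ++ x :: b = c ++ x :: d -> a = c /\ b = d.
Proof.
move=> U E.
have xa : x \notin a by move: U; rewrite cat_uniq /= => /and4P[_ /norP[]].
have xc : x \notin c by move: U; rewrite E cat_uniq /= => /and4P[_ /norP[]].
have size_ac : size a = size c.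
  have := congr1 (index x) E.
  by rewrite !index_cat (negbTE xa) (negbTE xc) /= eqxx !addn0.
by move/eqP: E; rewrite eqseq_cat // => /andP[/eqP -> /eqP [->]].
Qed.

Lemma path_of_consecutive (T : Type) (r : rel T) x p :
  (forall a y z b, x :: p = a ++ y :: z :: b -> r y z) -> path r x p.
Proof.
elim: p x => [|y p IH] x //= rxp; apply/andP; split; first exact: (rxp [::]).
by apply: IH => a u v b E; apply: (rxp (x :: a)); rewrite E.
Qed.

Lemma mem_rcons_split (T : eqType) (q : seq T) m i :
  i \in q -> exists u n w, rcons q m = u ++ i :: n :: w.
Proof.
case/splitPr=> u v; exists u, (head m v), (behead (rcons v m)).
by rewrite rcons_cat; case: v.
Qed.

Lemma rcons_eq_cat_cons (T : Type) (q u w : seq T) m i n :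
  rcons q m = u ++ i :: n :: w -> q = u ++ i :: belast n w /\ m = last n w.
Proof. by rewrite [n :: w]lastI -rcons_cons -rcons_cat => /rcons_inj[-> ->]. Qed.

Local Open Scope ring_scope.
Local Open Scope classical_set_scope.

Lemma sum_telescope (T : Type) (V : zmodType) (f D : T -> V) q m :
  (forall u i n w, rcons q m = u ++ i :: n :: w -> f i = D i - D n) ->
  \sum_(i <- q) f i = D (head m q) - D m.
Proof.
elim: q => [|v q IH] f_eq; first by rewrite big_nil subrr.
rewrite big_cons (f_eq [::] v (head m q) (behead (rcons q m))); last by case: q {IH f_eq}.
rewrite IH ?subrKA // => u i n w E.
by apply: (f_eq (v :: u)); rewrite rcons_cons E.
Qed.

Section Chains.
Variables (R : realType) (A : finType) (e : env A R).
Implicit Types (t : profile A R) (X : set A) (p q : seq A).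

Lemma links_cat (E : A -> A -> Prop) x a b :
  links E x (a ++ b) <-> links E x a /\ links E (last x a) b.
Proof. by elim: a x => [|y a IH] x /=; [tauto | rewrite IH; tauto]. Qed.

Lemma sub_in_links (E E' : A -> A -> Prop) x q :
  (forall u v, u \in belast x q -> E u v -> E' u v) -> links E x q -> links E' x q.
Proof.
elim: q x => [|y q IH] x //= EE' [Exy L]; split; first by apply: EE'; rewrite ?mem_head.
by apply: IH L => u v uq; apply: EE'; rewrite inE uq orbT.
Qed.

Lemma links_avoid t X x q : ~ X x ->
  links (link e t X) x q <-> links (link e t set0) x q /\ forall v, v \in q -> ~ X v.
Proof.
elim: q x => [|y q IH] x Xx /=; first by split => // _; split.
split.
- move=> [[_ [Xy [b n]]] /(IH y Xy)[L0 H]]; split; first by do !split.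
  by move=> v; rewrite inE => /orP[/eqP ->|/H].
- move=> [[[_ [_ [b n]]] L] H].
  have Xy : ~ X y by apply: H; rewrite mem_head.
  split; first by do !split.
  by apply/(IH y Xy); split=> // v vq; apply: H; rewrite inE vq orbT.
Qed.

Lemma chain_avoid t X p :
  chain e t X p <-> chain e t set0 p /\ forall v, v \in p -> ~ X v.
Proof.
case: p => [|x q] /=; first by split => // -[].
split.
- move=> [xr [Xx [/(links_avoid _ _ Xx)[L0 H] U]]]; split; first by do !split.
  by move=> v; rewrite inE => /orP[/eqP ->|/H].
- move=> [[xr [_ [L U]]] H].
  have Xx : ~ X x by apply: H; rewrite mem_head.
  do !split => //; apply/(links_avoid _ _ Xx); split=> // v vq.
  by apply: H; rewrite inE vq orbT.
Qed.

Lemma chain_set0 t X p : chain e t X p -> chain e t set0 p.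
Proof. by case/chain_avoid. Qed.

Lemma chain_uniq t X p : chain e t X p -> uniq p.
Proof. by case: p => [|x q] //= [_ [_ [_ ->]]]. Qed.

Lemma chain_prefix t X a k b : chain e t X (a ++ k :: b) -> chain e t X (rcons a k).
Proof.
case: a => [|x a]; first by move=> [kr [Xk _]].
rewrite -cat_rcons => -[xr [Xx [/links_cat[L _] U]]]; do !split => //.
by move: U; rewrite cat_uniq => /andP[].
Qed.

Lemma chain_link t X a k y b : chain e t X (a ++ k :: y :: b) -> link e t X k y.
Proof.
case: a => [|x a] /=; first by move=> [_ [_ [[L _] _]]].
by move=> [_ [_ [/links_cat[_ /= [_ [L _]]] _]]].
Qed.

Lemma chain_nonbuyer t X q m k : chain e t X (rcons q m) -> k \in q -> ~~ buyer e k.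
Proof.
move=> C /splitPr kq; case: kq C => a b; rewrite rcons_cat /=.
by case: b => [|y b] /= /chain_link [_ [_ []]].
Qed.

Lemma chain_informed t X p k : chain e t X p -> k \in p -> informed e t set0 k.
Proof.
move=> /chain_set0 C /splitPr kp; case: kp C => a b C.
by exists a; apply: chain_prefix C.
Qed.

End Chains.

Section TreeChains.
Variables (R : realType) (A : finType) (e : env A R) (tt : profile A R).
Hypothesis tree : is_tree (net_adj e tt).
Implicit Types (t : profile A R) (X : set A) (p q : seq A).

Lemma net_adj_sym : symmetric (net_adj e tt).
Proof. by case=> [u|] [v|] //=; rewrite orbC. Qed.

Lemma link_net_adj t X u v : feasible e tt t -> informed e t set0 u ->
  link e t X u v -> net_adj e tt (Some u) (Some v).
Proof.
move=> F Iu [_ [_ [bu uv]]]; have [_ /(_ bu) /fintype.subsetP nbr_sub] := F u Iu.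
by rewrite /= bu (nbr_sub _ uv).
Qed.

Lemma chain_net_path t X p : feasible e tt t -> chain e t X p ->
  path (net_adj e tt) None (map Some p) /\ uniq (None :: map Some p).
Proof.
move=> F C; split; last first.
  rewrite /= (map_inj_uniq (@Some_inj _)) (chain_uniq C) andbT.
  by apply/mapP => -[].
case: p C => [|x q] // C; rewrite /= path_map; apply/andP; split; first by case: C.
apply: path_of_consecutive => a y z b E; rewrite E in C.
apply: link_net_adj F _ (chain_link C).
by apply: chain_informed C _; rewrite mem_cat mem_head orbT.
Qed.

Lemma chain_unique t X Y q q' v : feasible e tt t ->
  chain e t X (rcons q v) -> chain e t Y (rcons q' v) -> q = q'.
Proof.
move=> F C C'; have [_ [_ acyclic]] := tree.
have [P U] := chain_net_path F C; have [P' U'] := chain_net_path F C'.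
have := acyclic_path_unique net_adj_sym acyclic P P' U U'.
by rewrite !map_rcons !last_rcons => /(_ erefl)/rcons_inj[/(inj_map (@Some_inj _))].
Qed.

Lemma critical_self t j : informed e t set0 j -> critical e t j j.
Proof. by move=> Ij; split=> // q _; rewrite mem_rcons mem_head. Qed.

Lemma critical_chain_mem t X p i v :
  critical e t i v -> chain e t X p -> v \in p -> i \in p.
Proof.
move=> [_ i_crit] C /splitPr vp; case: vp C => a b C.
have : i \in rcons a v by apply: i_crit; apply: chain_prefix (chain_set0 C).
by rewrite -cat_rcons mem_cat => ->.
Qed.

Lemma critical_informed t i v : critical e t i v -> informed e t set0 i.
Proof. by move=> [[q C] i_crit]; apply: chain_informed C (i_crit q C). Qed.

Lemma critical_trans t a b c : critical e t a b -> critical e t b c -> critical e t a c.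
Proof.
move=> ab [Ic b_crit]; split=> // q C.
exact: critical_chain_mem ab C (b_crit q C).
Qed.

Lemma critical_dset t a b : critical e t a b -> dset e t b `<=` dset e t a.
Proof. by move=> ab c; apply: critical_trans ab. Qed.

Lemma critical_iff_mem t X q v a : feasible e tt t ->
  chain e t X (rcons q v) -> critical e t a v <-> a \in rcons q v.
Proof.
move=> F C; split=> [a_crit|aC].
  by apply: critical_chain_mem a_crit C _; rewrite mem_rcons mem_head.
split=> [|q' C']; first by exists q; apply: chain_set0 C.
by rewrite -(chain_unique F C C').
Qed.

End TreeChains.

Section Welfare.
Variables (R : realType) (A : finType) (e : env A R).
Implicit Types (t : profile A R) (X Y : set A) (a : alloc A) (q : seq A).

Lemma sum_cost_ge q : uniq q -> - \sum_k `|cost e k| <= \sum_(k <- q) cost e k.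
Proof.
move=> U; rewrite lerNl -sumrN big_uniq //= [leRHS](bigID (mem q)) /= -[leLHS]addr0.
apply: lerD; last exact: sumr_ge0.
by apply: ler_sum => k _; rewrite -normrN ler_norm.
Qed.

Lemma welfare_bounded t X :
  has_ubound [set welfare e t a | a in [set a | valid_alloc e t X a]].
Proof.
exists (\sum_k `|bid t k| + \sum_k `|cost e k|) => _ [[[m q]|] Va <-] /=.
- have [_ C] := Va.
  have /andP[_ U] : (m \notin q) && uniq q by rewrite -rcons_uniq (chain_uniq C).
  apply: lerD; first by rewrite (bigD1 m) //= (le_trans (ler_norm _)) ?lerDl ?sumr_ge0.
  by rewrite lerNl sum_cost_ge.
- by rewrite addr_ge0 ?sumr_ge0.
Qed.

Lemma welfare_le_Wstar t X a : valid_alloc e t X a -> welfare e t a <= Wstar e t X.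
Proof. by move=> Va; apply: (ub_le_sup (welfare_bounded t X)); exists a. Qed.

Lemma Wstar_le t X c :
  (forall a, valid_alloc e t X a -> welfare e t a <= c) -> Wstar e t X <= c.
Proof.
move=> le_c; apply: ge_sup; first by exists 0, None.
by move=> _ [a Va <-]; apply: le_c.
Qed.

Lemma Wstar_ge0 t X : 0 <= Wstar e t X.
Proof. exact: (@welfare_le_Wstar t X None). Qed.

Lemma Wstar_le_Wstar t t' X Y :
  (forall a, valid_alloc e t X a -> valid_alloc e t' Y a /\ welfare e t a = welfare e t' a) ->
  Wstar e t X <= Wstar e t' Y.
Proof. by move=> sub; apply: Wstar_le => a /sub[Va ->]; apply: welfare_le_Wstar. Qed.

Lemma valid_alloc_avoid t X a : valid_alloc e t X a <->
  valid_alloc e t set0 a /\ forall m q, a = Some (m, q) -> forall v, v \in rcons q m -> ~ X v.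
Proof.
case: a => [[m q]|] /=; last by split.
split=> [[bm /chain_avoid[C avoid]]|[[bm C] avoid]]; first by split=> // _ _ [<- <-].
by split=> //; apply/chain_avoid; split=> //; apply: avoid.
Qed.

Lemma Wstar_antitone t X Y : X `<=` Y -> Wstar e t Y <= Wstar e t X.
Proof.
move=> XY; apply: Wstar_le_Wstar => a /valid_alloc_avoid[V0 avoid]; split=> //.
by apply/valid_alloc_avoid; split=> // m q a_eq v vq /XY; apply: avoid a_eq v vq.
Qed.

Lemma Wstar_dset t i : informed e t set0 i -> Wstar e t (dset e t i) = Wstar e t [set i].
Proof.
move=> Ii; apply/le_anti/andP; split.
  by apply: Wstar_antitone => _ ->; apply: critical_self.
apply: Wstar_le_Wstar => a /valid_alloc_avoid[V0 avoid]; split=> //.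
apply/valid_alloc_avoid; split=> // m q a_eq v vq v_crit.
move: V0; rewrite a_eq => -[_ C].
exact: avoid a_eq i (critical_chain_mem v_crit C vq) erefl.
Qed.

Lemma Wstar_le_critical t i v : critical e t i v -> Wstar e t [set i] <= Wstar e t [set v].
Proof.
move=> iv; have [Iv _] := iv.
rewrite -(Wstar_dset (critical_informed iv)) -(Wstar_dset Iv).
by apply: Wstar_antitone; apply: critical_dset.
Qed.

Lemma welfare_le_SW t q j : chain e t set0 (rcons q j) -> welfare e t (Some (j, q)) <= SW e t j.
Proof.
move=> C; rewrite /SW lerD2l lerN2; apply: ge_inf; last by exists q.
exists (- \sum_k `|cost e k|) => _ [q' C' <-].
have /andP[_ U] : (j \notin q') && uniq q' by rewrite -rcons_uniq (chain_uniq C').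
exact: sum_cost_ge.
Qed.

End Welfare.

Section ChainSuccessor.
Variables (R : realType) (A : finType) (e : env A R) (tt : profile A R).
Hypothesis tree : is_tree (net_adj e tt).
Implicit Types (t : profile A R) (X Y : set A) (q u w : seq A).

Lemma chain_succ_critical t X u i n w : feasible e tt t ->
  chain e t X (u ++ i :: n :: w) -> critical e t i n.
Proof.
move=> F C; have Cn : chain e t X (rcons (rcons u i) n).
  by apply: (chain_prefix (b := w)); rewrite cat_rcons.
by apply/(critical_iff_mem tree _ F Cn); rewrite mem_rcons !inE mem_rcons mem_head orbT.
Qed.

Lemma chain_succ_unique t X Y u i n w u' n' w' : feasible e tt t ->
  chain e t X (u ++ i :: n :: w) -> chain e t Y (u' ++ i :: n' :: w') ->
  n \in u' ++ i :: n' :: w' -> n = n'.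
Proof.
move=> F C C' np'; case/splitPr E: _ / np' => [pre post].
rewrite E in C'.
have Cun : chain e t X (rcons (rcons u i) n).
  by apply: (chain_prefix (b := w)); rewrite cat_rcons.
have pre_eq := chain_unique tree F (chain_prefix C') Cun.
have U : uniq (u' ++ i :: n' :: w') by rewrite E; apply: chain_uniq C'.
have /(uniq_cat_cons_inj U)[_ [-> _]] // : u' ++ i :: n' :: w' = u ++ i :: n :: post.
by rewrite E pre_eq cat_rcons.
Qed.

Lemma crit_succ_dset t q m u i n w j : feasible e tt t ->
  chain e t set0 (rcons q m) -> rcons q m = u ++ i :: n :: w ->
  crit_succ e t m i j -> dset e t j = dset e t n.
Proof.
move=> F C E [jm [ji [ji_sub j_max]]].
have U : uniq (u ++ i :: n :: w) by rewrite -E; apply: chain_uniq C.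
have mem_chain v : v \in u ++ i :: n :: w -> critical e t v m.
  by move=> v_in; apply/(critical_iff_mem tree _ F C); rewrite E.
have i_n : critical e t i n.
  by apply: (chain_succ_critical (X := set0) (u := u) (w := w) F); rewrite -E.
have ni : n <> i by move=> ni; move: U; rewrite ni cat_uniq /= inE eqxx /= !andbF.
apply/seteqP; split; last first.
  by apply: j_max; [apply: mem_chain; rewrite mem_cat !inE eqxx !orbT | | apply: critical_dset].
apply: critical_dset.
(* i is critical for j, so i lies on the chain to j and its successor n precedes j. *)
have i_j : critical e t i j by apply: ji_sub; apply: critical_self (critical_informed jm).
have : j \in rcons q m by apply: critical_chain_mem jm C _; rewrite mem_rcons mem_head.
case/splitPr Ej: _ / => [pre post].
have Cj : chain e t set0 (rcons pre j) by apply: (chain_prefix (b := post)); rewrite -Ej.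
have : i \in rcons pre j by apply: critical_chain_mem i_j Cj _; rewrite mem_rcons mem_head.
rewrite mem_rcons inE => /orP[/eqP i_eq_j|/(mem_rcons_split j)[a [n' [b pre_eq]]]].
  by case: ji.
have n'_eq : n' = n.
  have := E; rewrite Ej -cat_rcons pre_eq -catA /=.
  by move=> /esym/(uniq_cat_cons_inj U)[_ [->]].
by apply/(critical_iff_mem tree _ F Cj); rewrite pre_eq -n'_eq mem_cat !inE eqxx !orbT.
Qed.

End ChainSuccessor.

Section IdmTcOutcome.
Variables (R : realType) (A : finType) (e : env A R) (tt : profile A R).
Hypothesis tree : is_tree (net_adj e tt).
Implicit Types (t : profile A R) (X : set A) (a : alloc A) (x : A -> R) (q u w : seq A).

Definition on_chain a i : bool := if a is Some (m, q) then i \in rcons q m else false.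

Lemma idm_tc_valid t a x : idm_tc e t a x -> valid_alloc e t set0 a.
Proof. by case: a => [[m q] [bm [C _]]|]. Qed.

Lemma idm_tc_efficient t a x a' : idm_tc e t a x ->
  valid_alloc e t set0 a' -> welfare e t a' <= welfare e t a.
Proof.
case: a => [[m q]|] /=.
  move=> [_ [_ [lcc_q [SW_ge0 [SW_max _]]]]].
  case: a' => [[m' q'] [bm' C']|_] /=; last by rewrite lcc_q.
  rewrite lcc_q; apply: le_trans (SW_max m' bm' _); last by exists q'.
  exact: welfare_le_SW C'.
move=> [SW_le0 _]; case: a' => [[m' q'] [bm' C']|//].
by apply: le_trans (SW_le0 m' bm' _); [apply: welfare_le_SW C' | exists q'].
Qed.

Lemma Wstar_idm_tc t a x : idm_tc e t a x -> Wstar e t set0 = welfare e t a.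
Proof.
move=> Hx; apply/le_anti/andP; split; last exact: welfare_le_Wstar (idm_tc_valid Hx).
by apply: Wstar_le => a'; apply: idm_tc_efficient Hx.
Qed.

Lemma Wstar_off_chain t a x i : idm_tc e t a x -> ~~ on_chain a i ->
  Wstar e t [set i] = Wstar e t set0.
Proof.
move=> Hx ia; apply/le_anti/andP; split; first by apply: Wstar_antitone; apply: sub0set.
rewrite (Wstar_idm_tc Hx); apply: welfare_le_Wstar; apply/valid_alloc_avoid.
split=> [|m q a_eq v vq /= vi]; first exact: idm_tc_valid Hx.
by move: ia; rewrite a_eq /= -vi vq.
Qed.

Lemma idm_tc_pay_winner t m q x : idm_tc e t (Some (m, q)) x ->
  x m = Wstar e t [set m] + \sum_(k <- q) cost e k.
Proof. by move=> [_ [_ [_ [_ [_ /(_ m) [pay_m _]]]]]]; apply: pay_m. Qed.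

Lemma idm_tc_pay_off_chain t a x i : idm_tc e t a x -> ~~ on_chain a i -> x i = 0.
Proof.
case: a => [[m q]|] Hx; last by case: Hx.
rewrite /= mem_rcons in_cons negb_or => /andP[im iq].
have [_ [C [_ [_ [_ /(_ i) [_ [_ [_ pay_off]]]]]]]] := Hx.
apply: pay_off => //; first exact/eqP.
by move=> [_ /(_ q C)]; rewrite mem_rcons in_cons (negbTE im) (negbTE iq).
Qed.

Lemma chain_succ_mem t X q m u i n w : chain e t X (rcons q m) ->
  rcons q m = u ++ i :: n :: w -> i \in q /\ i != m.
Proof.
move=> C E; have [q_eq _] := rcons_eq_cat_cons E.
have iq : i \in q by rewrite q_eq mem_cat mem_head orbT.
split=> //; apply: contraTneq iq => ->.
by move: (chain_uniq C); rewrite rcons_uniq => /andP[].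
Qed.

Lemma idm_tc_pay_chain t m q x u i n w : feasible e tt t ->
  idm_tc e t (Some (m, q)) x -> rcons q m = u ++ i :: n :: w ->
  x i = Wstar e t [set i] - Wstar e t [set n] - cost e i.
Proof.
move=> F Hx E; have [_ [C [_ [_ [_ /(_ i) [_ [pay_crit _]]]]]]] := Hx.
have [_ /eqP im] := chain_succ_mem C E.
have Cs : chain e t set0 (u ++ i :: n :: w) by rewrite -E.
have i_m : critical e t i m.
  by apply/(critical_iff_mem tree _ F C); rewrite E mem_cat mem_head orbT.
have [j [succ_j ->]] := pay_crit im i_m.
rewrite (Wstar_dset (critical_informed i_m)) (crit_succ_dset tree F C E succ_j).
by rewrite (Wstar_dset (chain_succ_critical tree F Cs).1).
Qed.

Lemma utility_off_chain t a x i : idm_tc e t a x -> ~~ on_chain a i ->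
  utility e tt a x i = 0.
Proof.
move=> Hx ia; rewrite /utility (idm_tc_pay_off_chain Hx ia) subr0.
case: a {Hx} ia => [[m q]|] //=.
by rewrite mem_rcons in_cons negb_or => /andP[/negbTE-> /negbTE->].
Qed.

Lemma utility_chain t m q x u i n w : feasible e tt t ->
  idm_tc e t (Some (m, q)) x -> rcons q m = u ++ i :: n :: w ->
  utility e tt (Some (m, q)) x i = Wstar e t [set n] - Wstar e t [set i].
Proof.
move=> F Hx E; have [_ [C _]] := Hx; have [iq im] := chain_succ_mem C E.
by rewrite /utility (negbTE im) iq (idm_tc_pay_chain F Hx E); lra.
Qed.

Lemma utility_truthful_buyer t a x i : idm_tc e t a x -> buyer e i -> bid t i = bid tt i ->
  utility e tt a x i = Wstar e t set0 - Wstar e t [set i].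
Proof.
move=> Hx bi bid_i; have [ia|ia] := boolP (on_chain a i); last first.
  by rewrite (utility_off_chain Hx ia) (Wstar_off_chain Hx ia) subrr.
case: a Hx ia => [[m q]|//] Hx; have [_ [C _]] := Hx.
rewrite /= mem_rcons in_cons => /orP[/eqP im|iq].
  by subst m; rewrite /utility eqxx (idm_tc_pay_winner Hx) (Wstar_idm_tc Hx) /= -bid_i; lra.
by move: bi; rewrite (negbTE (chain_nonbuyer C iq)).
Qed.

Lemma idm_tc_split_intermediate t m q x i : idm_tc e t (Some (m, q)) x ->
  ~~ buyer e i -> i \in rcons q m -> exists u n w, rcons q m = u ++ i :: n :: w.
Proof.
move=> [bm _] bi; rewrite mem_rcons in_cons => /orP[/eqP im|]; last exact: mem_rcons_split.
by move: bi; rewrite im bm.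
Qed.

Lemma revenue_idm_tc t m q x : feasible e tt t ->
  idm_tc e t (Some (m, q)) x -> revenue x = Wstar e t [set head m q].
Proof.
move=> F Hx; have [_ [C _]] := Hx.
have tele : \sum_(i <- q) (x i + cost e i) = Wstar e t [set head m q] - Wstar e t [set m].
  apply: (sum_telescope (D := fun v => Wstar e t [set v])) => u i n w E.
  by rewrite (idm_tc_pay_chain F Hx E) subrK.
rewrite /revenue (bigID (mem (rcons q m))) /= [X in _ + X]big1 ?addr0; last first.
  by move=> i; apply: (idm_tc_pay_off_chain (i := i) Hx).
rewrite -big_uniq ?(chain_uniq C) //= big_rcons /= (idm_tc_pay_winner Hx).
by move: tele; rewrite big_split /=; lra.
Qed.

Lemma revenue_none t x : idm_tc e t None x -> revenue x = 0.
Proof. by move=> [_ x0]; rewrite /revenue big1. Qed.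

End IdmTcOutcome.

Section Deviation.
Variables (R : realType) (A : finType) (e : env A R) (tt : profile A R).
Implicit Types (t : profile A R) (X : set A) (p q : seq A).

Lemma same_except_sym t t' i : same_except t t' i -> same_except t' t i.
Proof. by move=> S k ki; have [-> ->] := S k ki. Qed.

Lemma chain_same_except t t' i X q v : same_except t t' i -> i \notin q ->
  chain e t X (rcons q v) -> chain e t' X (rcons q v).
Proof.
move=> S; case: q => [|y q] iq //= [yr [Xy [L U]]]; do !split => //.
move: L; apply: sub_in_links => u z; rewrite belast_rcons => uq.
have ui : u <> i by move=> ui; move: iq; rewrite -ui uq.
by rewrite /link (proj2 (S u ui)).
Qed.

Lemma Wstar_same_except t t' i : same_except t t' i ->
  Wstar e t' [set i] = Wstar e t [set i].
Proof.
suff le_W t1 t2 : same_except t1 t2 i -> Wstar e t1 [set i] <= Wstar e t2 [set i].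
  by move=> S; apply/le_anti; rewrite !le_W //; apply: same_except_sym.
move=> S; apply: Wstar_le_Wstar => -[[m q] [bm C]|//]; have /chain_avoid[_ avoid] := C.
have mi : m <> i by apply: avoid; rewrite mem_rcons mem_head.
have iq : i \notin q by apply/negP => iq; apply: (avoid i) => //; rewrite mem_rcons inE iq orbT.
by split; [split=> //; apply: chain_same_except S iq C | rewrite /= (proj1 (S m mi))].
Qed.

Lemma chain_misreport t t' i X p : feasible e tt t' -> same_except t t' i ->
  nbr t i = nbr tt i -> informed e t' set0 i -> chain e t' X p -> chain e t X p.
Proof.
move=> F' S nbr_i Ii; case: p => [|y q] //= [yr [Xy [L U]]]; do !split => //.
move: L; apply: sub_in_links => u v _; have [->|ui] := eqVneq u i; last first.
  by rewrite /link (proj2 (S u (elimN eqP ui))).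
move=> [Xi [Xv [bi iv]]]; do !split => //.
have [_ /(_ bi) /fintype.subsetP nbr_sub] := F' i Ii.
by rewrite nbr_i; apply: nbr_sub.
Qed.

Lemma Wstar_misreport t t' i X : feasible e tt t' -> same_except t t' i ->
  nbr t i = nbr tt i -> ~~ buyer e i -> informed e t' set0 i ->
  Wstar e t' X <= Wstar e t X.
Proof.
move=> F' S nbr_i bi Ii; apply: Wstar_le_Wstar => -[[m q] [bm C]|//]; split.
  by split=> //; apply: chain_misreport F' S nbr_i Ii C.
have mi : m <> i by move=> mi; move: bi; rewrite -mi bm.
by rewrite /= (proj1 (S m mi)).
Qed.

End Deviation.

Section IdmTcProperties.
Variables (R : realType) (A : finType) (e : env A R) (tt : profile A R).
Hypothesis tree : is_tree (net_adj e tt).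
Implicit Types (t : profile A R) (a : alloc A) (x : A -> R).

Lemma idm_tc_ir_buyer t a x i : idm_tc e t a x -> buyer e i -> bid t i = bid tt i ->
  0 <= utility e tt a x i.
Proof.
move=> Hx bi bid_i; rewrite (utility_truthful_buyer Hx bi bid_i) subr_ge0.
by apply: Wstar_antitone; apply: sub0set.
Qed.

Lemma idm_tc_ir_intermediate t a x i : feasible e tt t -> idm_tc e t a x ->
  ~~ buyer e i -> 0 <= utility e tt a x i.
Proof.
move=> F Hx bi; have [ia|ia] := boolP (on_chain a i); last first.
  by rewrite (utility_off_chain tt Hx ia).
case: a Hx ia => [[m q]|//] Hx /= iqm; have [_ [C _]] := Hx.
have [u [n [w E]]] := idm_tc_split_intermediate Hx bi iqm.
rewrite (utility_chain tree F Hx E) subr_ge0; apply: Wstar_le_critical.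
by apply: (chain_succ_critical tree (X := set0) (u := u) (w := w) F); rewrite -E.
Qed.

Lemma idm_tc_ic_buyer t t' a x a' x' i : same_except t t' i -> buyer e i ->
  bid t i = bid tt i -> idm_tc e t a x -> idm_tc e t' a' x' ->
  utility e tt a' x' i <= utility e tt a x i.
Proof.
move=> S bi bid_i Hx Hx'; rewrite (utility_truthful_buyer Hx bi bid_i).
have [ia'|ia'] := boolP (on_chain a' i); last first.
  by rewrite (utility_off_chain tt Hx' ia') subr_ge0; apply: Wstar_antitone; apply: sub0set.
case: a' Hx' ia' => [[m' q']|//] Hx'; have [_ [C' _]] := Hx'.
rewrite /= mem_rcons in_cons => /orP[/eqP im|iq']; last first.
  by move: bi; rewrite (negbTE (chain_nonbuyer C' iq')).
subst m'; have iq' : i \notin q' by move: (chain_uniq C'); rewrite rcons_uniq => /andP[].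
have C : chain e t set0 (rcons q' i) by apply: chain_same_except (same_except_sym S) iq' C'.
have := welfare_le_Wstar (a := Some (i, q')) (conj bi C).
rewrite /utility eqxx (idm_tc_pay_winner Hx') (Wstar_same_except e S) /= -bid_i.
lra.
Qed.

Lemma idm_tc_ic_intermediate t t' a x a' x' i : feasible e tt t -> feasible e tt t' ->
  same_except t t' i -> ~~ buyer e i -> nbr t i = nbr tt i ->
  idm_tc e t a x -> idm_tc e t' a' x' -> utility e tt a' x' i <= utility e tt a x i.
Proof.
move=> F F' S bi nbr_i Hx Hx'.
have [ia'|ia'] := boolP (on_chain a' i); last first.
  by rewrite (utility_off_chain tt Hx' ia'); apply: idm_tc_ir_intermediate F Hx bi.
case: a' Hx' ia' => [[m' q']|//] Hx' /= iqm'; have [bm' [C' _]] := Hx'.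
have [u' [n' [w' E']]] := idm_tc_split_intermediate Hx' bi iqm'.
have Ii := chain_informed C' iqm'.
rewrite (utility_chain tree F' Hx' E') (Wstar_same_except e S).
have m'i : m' <> i by move=> m'i; move: bi; rewrite -m'i bm'.
have W_n' : Wstar e t' [set n'] <= welfare e t (Some (m', q')).
  have -> : welfare e t (Some (m', q')) = welfare e t' (Some (m', q')).
    by rewrite /= (proj1 (S m' m'i)).
  rewrite -(Wstar_idm_tc Hx').
  by apply: Wstar_antitone; apply: sub0set.
have C't : chain e t set0 (rcons q' m') by apply: chain_misreport F' S nbr_i Ii C'.
have [ia|ia] := boolP (on_chain a i); last first.
  rewrite (utility_off_chain tt Hx ia) subr_le0 (Wstar_off_chain Hx ia) (Wstar_idm_tc Hx).
  by apply: le_trans W_n' _; apply: idm_tc_efficient Hx _; split.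
case: a Hx ia => [[m q]|//] Hx /= iqm; have [_ [C _]] := Hx.
have [u [n [w E]]] := idm_tc_split_intermediate Hx bi iqm.
rewrite (utility_chain tree F Hx E) lerD2r.
have [<-|nn'] := eqVneq n n'; first exact: Wstar_misreport F' S nbr_i bi Ii.
apply: le_trans W_n' (welfare_le_Wstar _); apply/valid_alloc_avoid.
split=> [|_ _ [<- <-] v vq' /= vn]; first by split.
have Cs : chain e t set0 (u ++ i :: n :: w) by rewrite -E.
have C's : chain e t set0 (u' ++ i :: n' :: w') by rewrite -E'.
move/eqP: nn'; apply; apply: (chain_succ_unique tree F Cs C's).
by rewrite -E' -vn.
Qed.

Lemma idm_tc_revenue_ge0 t a x : feasible e tt t -> idm_tc e t a x -> 0 <= revenue x.
Proof.
case: a => [[m q]|] F Hx; last by rewrite (revenue_none Hx).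
by rewrite (revenue_idm_tc tree F Hx) Wstar_ge0.
Qed.

Lemma idm_tc_revenue_ge_vickrey t a x j k : feasible e tt t -> idm_tc e t a x ->
  j \in rs e -> k \in rs e -> buyer e j -> buyer e k -> j != k ->
  Num.min (bid t j) (bid t k) <= revenue x.
Proof.
move=> F Hx jr kr bj bk jk; case: a Hx => [[m q]|] Hx; last first.
  have Vj : valid_alloc e t set0 (Some (j, [::])) by do !split.
  by have := idm_tc_efficient Hx Vj; rewrite (revenue_none Hx) /= big_nil subr0 ge_min => ->.
rewrite (revenue_idm_tc tree F Hx).
have bid_le l : l \in rs e -> buyer e l -> l != head m q -> bid t l <= Wstar e t [set head m q].
  move=> lr bl lh; have := @welfare_le_Wstar _ _ e t [set head m q] (Some (l, [::])).
  by rewrite /= big_nil subr0; apply; do !split => //; apply/eqP.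
have [jh|jh] := eqVneq j (head m q); last by rewrite ge_min bid_le.
by rewrite ge_min (bid_le k) ?orbT // -jh eq_sym.
Qed.

End IdmTcProperties.

Unset Implicit Arguments.

Theorem proposition1 (R : realType) (A : finType) (e : env A R) (tt : profile A R) :
  (forall i, buyer e i -> 0 <= bid tt i) ->
  is_tree (net_adj e tt) ->
  [/\ efficient e tt (idm_tc e),
      individually_rational e tt (idm_tc e),
      incentive_compatible e tt (idm_tc e),
      weakly_budget_balanced e tt (idm_tc e) &
      revenue_ge_vickrey e tt (idm_tc e)].
Proof.
(* Nonnegative true values are not needed: IR only concerns truthful bids. *)
move=> _ tree; split.
- by move=> t a x _ Hx a'; apply: idm_tc_efficient Hx.
- move=> t a x i F Hx; split; last exact: (idm_tc_ir_intermediate tree F Hx).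
  by move=> bi; rewrite /truthful_at bi; apply: idm_tc_ir_buyer Hx bi.
- move=> i t t' a x a' x' F F' S; rewrite /truthful_at; case: ifP => bi tr Hx Hx'.
    exact: (idm_tc_ic_buyer S bi tr Hx Hx').
  exact: (idm_tc_ic_intermediate tree F F' S (negbT bi) tr Hx Hx').
- by move=> t a x F Hx; apply: (idm_tc_revenue_ge0 tree F Hx).
- by move=> t a x F Hx j k; apply: (idm_tc_revenue_ge_vickrey tree F Hx).
Qed.
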